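(* Consider Method 1.1 (described in the context) and assume in addition: $f$ is convex; each $f_j$ is strongly convex with constant $\mu_j>0$; $D$ satisfies the Slater condition; no point of absolute minimum of $f$ on $\mathbb{R}^n$ (if any) lies in $\operatorname{int}D$. Then $X^*=\{x^*\}$ is a singleton, and, provided the generated sequence $\{y_i\}$ is bounded, every constructed point $x_k$ satisfies $\|x_k-x^*\|\le\sqrt{\varepsilon_k/\mu}$, where $\mu=\min_j\mu_j$; if moreover $f$ is Lipschitz with constant $L$, then also $|f(x_k)-f^*|\le L\sqrt{\varepsilon_k/\mu}$.
   Context: Setting: $f_j$, $j\in J=\{1,\dots,m\}$, are convex functions on $\mathbb{R}^n$; $D=\{x:f_j(x)\le0,\ j\in J\}$; $f$ is continuous and attains its minimum on $D$; each $D_j=\{x:f_j(x)\le0\}$ has nonempty interior. Notation: $K=\{0,1,\dots\}$; $F=\max_jf_j$; $D_\varepsilon=\{x:F(x)\le\varepsilon\}$; $f^*=\min_Df$; $X^*=\{x\in D:f(x)=f^*\}$; $E^*=\{x:f(x)\le f^*\}$; $W^1(x,D_j)=\{a:\|a\|=1,\ \langle a,z-x\rangle\le0\ \forall z\in D_j\}$. Method 1.1: fix $x^*\in X^*$; choose closed convex $M_0\ni x^*$, points $v^j\in\operatorname{int}D_j$, $\varepsilon_0\ge0$, a constant $q\ge1$; $k=i=0$. Step 1: choose $y_i\in M_i\cap E^*$. Step 2: $J_i=\{j:y_i\notin D_j\}$; stop if empty. Step 3: if $y_i\notin D_{\varepsilon_k}$, choose closed convex $G_i\ni x^*$, $Q_i=M_i\cap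 G_i$; else set $i_k=i$, $x_k=y_{i_k}$, choose closed convex $Q_i\ni x^*$, choose $\varepsilon_{k+1}\ge0$, $k\leftarrow k+1$. Step 4: for $j\in J_i$ choose $z_i^j\in(v^j,y_i)$, $z_i^j\notin\operatorname{int}D_j$, with $y_i+q_i^j(z_i^j-y_i)\in D_j$ for some $q_i^j\in[1,q]$; for $j\notin J_i$, $z_i^j=y_i$. Step 5: choose $H_i\subset J_i$ containing some $j_i$ maximizing $\|y_i-z_i^j\|$ over $J_i$. Step 6: for $j\in H_i$ choose nonempty finite $A_i^j\subset W^1(z_i^j,D_j)$; $M_{i+1}=Q_i\cap\{x:\langle a,x-z_i^j\rangle\le0\ \forall j\in H_i, a\in A_i^j\}$; $i\leftarrow i+1$, go to Step 1. *)

From mathcomp Require Import all_boot all_order all_algebra.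
From mathcomp Require Import reals.
Set Implicit Arguments. Unset Strict Implicit. Unset Printing Implicit Defensive.
Import Order.TTheory GRing.Theory Num.Theory.
Local Open Scope ring_scope.

Section Geometry.
Variables (R : realType) (n : nat).
Local Notation vec := 'rV[R]_n.

Definition dotp (u v : vec) : R := \sum_(i < n) u 0 i * v 0 i.
Definition enorm (u : vec) : R := Num.sqrt (dotp u u).

Definition convex_fun (g : vec -> R) : Prop :=
  forall (x y : vec) (t : R), 0 <= t <= 1 ->
    g (t *: x + (1 - t) *: y) <= t * g x + (1 - t) * g y.

(* strong convexity with constant mu (convention of the paper's school:
   g(tx+(1-t)y) <= t g x + (1-t) g y - mu t (1-t) ||x-y||^2) *)
Definition strongly_convex (g : vec -> R) (mu : R) : Prop :=
  forall (x y : vec) (t : R), 0 <= t <= 1 ->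
    g (t *: x + (1 - t) *: y)
      <= t * g x + (1 - t) * g y - mu * t * (1 - t) * (enorm (x - y)) ^+ 2.

Definition convex_set (S : vec -> Prop) : Prop :=
  forall (x y : vec) (t : R), S x -> S y -> 0 <= t <= 1 ->
    S (t *: x + (1 - t) *: y).

Definition closed_set (S : vec -> Prop) : Prop :=
  forall x : vec, (forall r : R, 0 < r -> exists y, S y /\ enorm (y - x) < r) -> S x.

Definition interior (S : vec -> Prop) (x : vec) : Prop :=
  exists r : R, 0 < r /\ forall y, enorm (y - x) < r -> S y.

Definition continuous_fun (g : vec -> R) : Prop :=
  forall (x : vec) (e : R), 0 < e ->
    exists d : R, 0 < d /\ forall y, enorm (y - x) < d -> `|g y - g x| < e.

Definition lipschitz (g : vec -> R) (L : R) : Prop :=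
  forall x y : vec, `|g x - g y| <= L * enorm (x - y).

Definition W1 (x : vec) (S : vec -> Prop) (a : vec) : Prop :=
  enorm a = 1 /\ forall z, S z -> dotp a (z - x) <= 0.

Definition open_segment (v y z : vec) : Prop :=
  exists t : R, 0 < t < 1 /\ z = v + t *: (y - v).

Definition is_min_on (g : vec -> R) (S : vec -> Prop) (fstar : R) : Prop :=
  (exists x, S x /\ g x = fstar) /\ forall x, S x -> fstar <= g x.

End Geometry.

Definition is_min_of (R : realType) (I : finType) (g : I -> R) (mu : R) : Prop :=
  (exists j, mu = g j) /\ forall j, mu <= g j.

Section Method.
Variables (R : realType) (n m : nat).
Local Notation vec := 'rV[R]_n.
Variable fs : 'I_m -> vec -> R.

Definition Dj (j : 'I_m) (x : vec) : Prop := fs j x <= 0.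
Definition Dset (x : vec) : Prop := forall j, fs j x <= 0.
(* D_eps = {x : F x <= eps}, F = max_j f_j; i.e. f_j x <= eps for all j *)
Definition Deps (eps : R) (x : vec) : Prop := forall j, fs j x <= eps.
Definition slater : Prop := exists x : vec, forall j, fs j x < 0.

(* iteration i of the method is reached: the method did not stop
   (Step 2) at any earlier iteration i' < i, i.e. J_i' was nonempty *)
Definition reached (y : nat -> vec) (i : nat) : Prop :=
  forall i', (i' < i)%N -> exists j, ~ Dj j (y i').

(* iteration i executes the "else" branch of Step 3: it sets
   i_k = i and x_k = y_i, with k = kc i *)
Definition sets_xk (y : nat -> vec) (eps : nat -> R) (kc : nat -> nat)
  (i : nat) : Prop :=
  reached y i /\ (exists j, ~ Dj j (y i)) /\ Deps (eps (kc i)) (y i).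

(* A run of Method 1.1.  Data:
   xstar = x^*, M i = M_i, v j = v^j, eps k = eps_k, q = q,
   y i = y_i, G i = G_i, Q i = Q_i, kc i = value of the counter k when
   iteration i starts, z i j = z_i^j, H i = H_i, A i j = A_i^j.
   f and fstar = f^* enter through E^* = {x : f x <= fstar}. *)
Definition method_1_1_run (f : vec -> R) (fstar : R) (xstar : vec)
  (M : nat -> vec -> Prop) (v : 'I_m -> vec) (eps : nat -> R) (q : R)
  (y : nat -> vec) (G Q : nat -> vec -> Prop) (kc : nat -> nat)
  (z : nat -> 'I_m -> vec) (H : nat -> 'I_m -> Prop)
  (A : nat -> 'I_m -> seq vec) : Prop :=
  [/\ (closed_set (M 0) /\ convex_set (M 0) /\ M 0 xstar),
      (forall j, interior (Dj j) (v j)),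
      (forall k, 0 <= eps k),
      (1 <= q /\ kc 0%N = 0%N) &
  forall i, reached y i ->
    (* Step 1 *)
    (M i (y i) /\ f (y i) <= fstar) /\
    (* Step 2: continue only if J_i = {j : y_i notin D_j} is nonempty *)
    ((exists j, ~ Dj j (y i)) ->
      [/\
      (* Step 3 *)
        (~ Deps (eps (kc i)) (y i) ->
           [/\ closed_set (G i), convex_set (G i), G i xstar,
               (forall x, Q i x <-> M i x /\ G i x) & kc i.+1 = kc i]),
        (Deps (eps (kc i)) (y i) ->
           [/\ closed_set (Q i), convex_set (Q i), Q i xstar &
               kc i.+1 = (kc i).+1]),
      (* Step 4 *)
        (forall j, ~ Dj j (y i) ->
           [/\ open_segment (v j) (y i) (z i j),
               ~ interior (Dj j) (z i j) &
               exists qij, 1 <= qij <= q /\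
                 Dj j (y i + qij *: (z i j - y i))]),
        (forall j, Dj j (y i) -> z i j = y i) /\
      (* Step 5 *)
        ((forall j, H i j -> ~ Dj j (y i)) /\
         exists ji, [/\ H i ji, ~ Dj ji (y i) &
           forall j, ~ Dj j (y i) -> enorm (y i - z i j) <= enorm (y i - z i ji)]) &
      (* Step 6 *)
        ((forall j, H i j ->
            A i j <> [::] /\ forall a, a \in A i j -> W1 (z i j) (Dj j) a) /\
         forall x, M i.+1 x <->
           (Q i x /\ forall j, H i j -> forall a, a \in A i j ->
                                   dotp a (x - z i j) <= 0))])].

End Method.

(* Two distinct minimisers x1, x2 of f over D would have a midpoint at which
   every f_j is strictly negative, by strong convexity; being interior to D and
   minimising f over D, the midpoint would minimise the convex f globally,
   which is excluded.  If y is eps-feasible, f y <= f^* and y is not in D, but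
   mu ||y - x^*||^2 > eps, then the point p = t y + (1 - t) x^* with
   mu (1 - t) ||y - x^*||^2 = eps and 0 < t <= 1 satisfies
   f_j p <= t (eps - mu (1 - t) ||y - x^*||^2) = 0 and f p <= f^*, so p is a
   second minimiser unless y = x^*, which lies in D. *)

From mathcomp Require Import all_boot all_order all_algebra.
From mathcomp Require Import reals.
From mathcomp Require Import ring lra.
Set Implicit Arguments.
Unset Strict Implicit.
Unset Printing Implicit Defensive.
Import Order.TTheory GRing.Theory Num.Theory.
Local Open Scope ring_scope.

Section Euclid.
Variables (R : realType) (n : nat).
Implicit Types (u : 'rV[R]_n) (t : R).

Lemma dotpp_ge0 u : 0 <= dotp u u.
Proof. by apply: sumr_ge0 => i _; rewrite -expr2 sqr_ge0. Qed.

Lemma dotpp_eq0 u : (dotp u u == 0) = (u == 0).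
Proof.
apply/idP/eqP => [|->]; last by rewrite /dotp big1 // => i _; rewrite mxE mul0r.
rewrite psumr_eq0 => [/allP u0|i _]; last by rewrite -expr2 sqr_ge0.
apply/rowP => i; apply/eqP; rewrite mxE -sqrf_eq0 expr2.
exact: implyP (u0 i (mem_index_enum _)) isT.
Qed.

Lemma enorm_ge0 u : 0 <= enorm u.
Proof. exact: sqrtr_ge0. Qed.

Lemma enorm0 : enorm (0 : 'rV[R]_n) = 0.
Proof. by apply/eqP; rewrite sqrtr_eq0 le_eqVlt dotpp_eq0 eqxx. Qed.

Lemma enorm_gt0 u : (0 < enorm u) = (u != 0).
Proof. by rewrite sqrtr_gt0 lt_neqAle dotpp_ge0 andbT eq_sym dotpp_eq0. Qed.

Lemma enormZ t u : enorm (t *: u) = `|t| * enorm u.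
Proof.
rewrite /enorm; have -> : dotp (t *: u) (t *: u) = t ^+ 2 * dotp u u.
  by rewrite /dotp mulr_sumr; apply: eq_bigr => i _; rewrite !mxE; ring.
by rewrite sqrtrM ?sqr_ge0 // sqrtr_sqr.
Qed.

Lemma normr_coord_le_enorm u i : `|u 0 i| <= enorm u.
Proof.
rewrite -sqrtr_sqr /enorm ler_sqrt ?dotpp_ge0 // /dotp (bigD1 i) //= -expr2.
by rewrite lerDl; apply: sumr_ge0 => k _; rewrite -expr2 sqr_ge0.
Qed.

End Euclid.

Section Convexity.
Variables (R : realType) (n : nat) (g : 'rV[R]_n -> R).
Hypothesis g_cvx : convex_fun g.

Lemma convex_fun_le_comb x y t C :
  0 <= t <= 1 -> g x <= C -> g y <= C -> g (t *: x + (1 - t) *: y) <= C.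
Proof.
move=> t01 gx gy; apply: le_trans (g_cvx _ _ t01) _.
case/andP: t01 => t0 t1; nra.
Qed.

Lemma convex_fun_le_avg (I : Type) (s : seq I) (F : I -> 'rV[R]_n) C :
  (0 < size s)%N -> (forall i, g (F i) <= C) ->
  g ((size s)%:R^-1 *: \sum_(i <- s) F i) <= C.
Proof.
move=> + gF; elim: s => [//|a [|b s] IH] _.
  by rewrite big_cons big_nil invr1 scale1r addr0.
set k := size (b :: s) in IH *.
have k_gt0 : 0 < k%:R :> R by rewrite ltr0n.
set t := (k.+1%:R : R)^-1.
have t01 : 0 <= t <= 1 by rewrite invr_ge0 ler0n invf_le1 ?ltr0n ?ler1n.
have -> : (size [:: a, b & s])%:R^-1 *: \sum_(i <- [:: a, b & s]) F i
        = t *: F a + (1 - t) *: (k%:R^-1 *: \sum_(i <- b :: s) F i).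
  rewrite big_cons scalerDr scalerA; congr (_ + _ *: _).
  by rewrite /t -natr1; field; rewrite natr1 !gt_eqF ?ltr0n.
exact: convex_fun_le_comb t01 (gF a) (IH isT).
Qed.

Lemma convex_fun_le_sym_segment x a t C :
  g (x + a) <= C -> g (x - a) <= C -> g x <= C -> `|t| <= 1 ->
  g (x + t *: a) <= C.
Proof.
move=> gxDa gxBa gx t1; have [t0|t0] := leP 0 t.
  have -> : x + t *: a = t *: (x + a) + (1 - t) *: x.
    by apply/rowP => i; rewrite !mxE; ring.
  by apply: convex_fun_le_comb; rewrite // t0 -(ger0_norm t0).
have -> : x + t *: a = (- t) *: (x - a) + (1 - - t) *: x.
  by apply/rowP => i; rewrite !mxE; ring.
by apply: convex_fun_le_comb; rewrite // oppr_ge0 (ltW t0) -(ltr0_norm t0).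
Qed.

(* On the unit ball around x, g is dominated by its values at x and at the
   vertices x +- n e_i of the scaled cross-polytope, whose average contains
   the ball. *)
Lemma convex_fun_bounded_on_ball x :
  exists C, forall y, enorm (y - x) <= 1 -> g y <= C.
Proof.
have [n0|n_gt0] := posnP n.
  exists (g x) => y _; suff -> : y = x by [].
  by apply/rowP => i; move: (ltn_ord i); rewrite {2}n0.
pose a i : 'rV[R]_n := n%:R *: 'e_i.
pose C := `|g x| + \sum_i (`|g (x + a i)| + `|g (x - a i)|).
have le_C i : `|g (x + a i)| + `|g (x - a i)| <= C.
  rewrite /C (bigD1 i) //= addrCA lerDl addr_ge0 //.
  by apply: sumr_ge0 => k _; rewrite addr_ge0.
have gx_le : g x <= C.
  apply: le_trans (ler_norm _) _; rewrite lerDl.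
  by apply: sumr_ge0 => k _; rewrite addr_ge0.
exists C => y y_near; set u := y - x.
have -> : y = (size (enum 'I_n))%:R^-1 *: \sum_(i <- enum 'I_n) (x + u 0 i *: a i).
  rewrite big_enum size_enum_ord big_split sumr_const card_ord /=.
  have -> : \sum_i u 0 i *: a i = n%:R *: u.
    rewrite [in RHS](row_sum_delta u) scaler_sumr; apply: eq_bigr => i _.
    by rewrite /a !scalerA mulrC.
  rewrite scalerDr scalerA mulVf ?pnatr_eq0 -?lt0n // scale1r -scaler_nat scalerA.
  by rewrite mulVf ?pnatr_eq0 -?lt0n // scale1r addrC subrK.
apply: convex_fun_le_avg; first by rewrite size_enum_ord.
move=> i; apply: convex_fun_le_sym_segment => //.
- by apply: le_trans (ler_norm _) (le_trans _ (le_C i)); rewrite lerDl.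
- by apply: le_trans (ler_norm _) (le_trans _ (le_C i)); rewrite lerDr.
- exact: le_trans (normr_coord_le_enorm _ _) y_near.
Qed.

Lemma convex_fun_lt0_nbhd x :
  g x < 0 -> exists r, 0 < r /\ forall y, enorm (y - x) < r -> g y < 0.
Proof.
move=> gx_lt0; have [C gC] := convex_fun_bounded_on_ball x.
have gx_le : g x <= C by apply: gC; rewrite subrr enorm0.
(* y = l z + (1 - l) x with z on the unit ball, and l C + (1 - l) g x < 0 *)
pose l := - g x / (C - 2 * g x).
have den_gt0 : 0 < C - 2 * g x by lra.
have l_gt0 : 0 < l by apply: divr_gt0; lra.
have l_le1 : l <= 1 by rewrite ler_pdivrMr // mul1r; lra.
have l_lt : l * (C - g x) < - g x.
  by rewrite /l mulrAC ltr_pdivrMr //; nra.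
exists l; split=> // y y_near.
pose z := x + l^-1 *: (y - x).
have gz : g z <= C.
  apply: gC; rewrite /z addrC addKr enormZ gtr0_norm ?invr_gt0 //.
  by rewrite -ler_pdivlMl ?invr_gt0 // invrK mulr1 ltW.
have -> : y = l *: z + (1 - l) *: x.
  rewrite /z scalerDr scalerA mulfV ?gt_eqF // scale1r.
  by apply/rowP => i; rewrite !mxE; ring.
apply: le_lt_trans (g_cvx _ _ _) _; first by rewrite ltW.
nra.
Qed.

Lemma convex_fun_local_min_global (S : 'rV[R]_n -> Prop) x :
  interior S x -> (forall y, S y -> g x <= g y) -> forall y, g x <= g y.
Proof.
move=> [r [r_gt0 ball_S]] x_min y; rewrite leNgt; apply/negP => gy_lt.
pose t := r / (enorm (y - x) + r).
have den_gt0 : 0 < enorm (y - x) + r by rewrite ltr_wpDl ?enorm_ge0.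
have t_gt0 : 0 < t by rewrite divr_gt0.
have t01 : 0 <= t <= 1 by rewrite ltW //= ler_pdivrMr // mul1r lerDr enorm_ge0.
have S_p : S (t *: y + (1 - t) *: x).
  apply: ball_S; have -> : t *: y + (1 - t) *: x - x = t *: (y - x).
    by apply/rowP => i; rewrite !mxE; ring.
  rewrite enormZ gtr0_norm // /t mulrAC ltr_pdivrMr //.
  by rewrite mulrDr ltrDl mulr_gt0.
have := x_min _ S_p; have := g_cvx y x t01; nra.
Qed.

End Convexity.

Lemma fin_common_radius (R : realType) (I : finType) (P : I -> R -> Prop) :
  (forall i r r', 0 < r' <= r -> P i r -> P i r') ->
  (forall i, exists r, 0 < r /\ P i r) ->
  exists r, 0 < r /\ forall i, P i r.
Proof.
move=> P_antimono P_ex.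
suff [r [r_gt0 Pr]] : exists r, 0 < r /\ forall i, i \in enum I -> P i r.
  by exists r; split=> // i; apply: Pr; rewrite mem_enum.
elim: (enum I) => [|i s [r [r_gt0 Pr]]]; first by exists 1.
have [ri [ri_gt0 Pri]] := P_ex i.
exists (Order.min ri r); split=> [|j]; first by rewrite lt_min ri_gt0.
rewrite in_cons => /orP [/eqP -> | j_s].
  by apply: P_antimono Pri; rewrite lt_min ri_gt0 r_gt0 ge_min lexx.
by apply: P_antimono (Pr j j_s); rewrite lt_min ri_gt0 r_gt0 ge_min lexx orbT.
Qed.

Lemma interior_Dset (R : realType) (n m : nat) (fs : 'I_m -> 'rV[R]_n -> R) x :
  (forall j, convex_fun (fs j)) -> (forall j, fs j x < 0) ->
  interior (Dset fs) x.
Proof.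
move=> fs_cvx fs_lt0.
have [|r [r_gt0 nbhd]] :=
  @fin_common_radius _ _ (fun j r => forall y, enorm (y - x) < r -> fs j y < 0)
  _ (fun j => convex_fun_lt0_nbhd (fs_cvx j) (fs_lt0 j)).
  by move=> j r r' /andP[_ r'_le] Pr y y_near; apply/Pr/(lt_le_trans y_near).
by exists r; split=> // y y_near j; apply/ltW/nbhd.
Qed.

Lemma strongly_convex_comb_le (R : realType) (n : nat) (g : 'rV[R]_n -> R)
    c mu x y t e :
  strongly_convex g c -> mu <= c -> 0 <= t <= 1 -> g x <= e -> g y <= 0 ->
  g (t *: x + (1 - t) *: y) <= t * (e - mu * (1 - t) * enorm (x - y) ^+ 2).
Proof.
move=> g_sc mu_le t01 gx gy; apply: le_trans (g_sc _ _ _ t01) _.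
case/andP: t01 => t0; rewrite -subr_ge0 => t1.
have D0 := sqr_ge0 (enorm (x - y)); set D := enorm (x - y) ^+ 2 in D0 *.
have tD0 : 0 <= t * (1 - t) * D by apply/mulr_ge0/D0/mulr_ge0.
have := ler_wpM2r tD0 mu_le; have := ler_wpM2l t0 gx; have := mulr_ge0_le0 t1 gy.
nra.
Qed.

Lemma lipschitz_ge0 (R : realType) (n : nat) (g : 'rV[R]_n -> R) L
    (x y : 'rV[R]_n) :
  lipschitz g L -> x != y -> 0 <= L.
Proof.
move=> g_lip xy.
rewrite -(pmulr_lge0 _ (_ : 0 < enorm (x - y))) ?enorm_gt0 ?subr_eq0 //.
exact: le_trans (normr_ge0 _) (g_lip x y).
Qed.

Section ConstrainedArgmin.
Variables (R : realType) (n m : nat).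
Variables (fs : 'I_m -> 'rV[R]_n -> R) (mus : 'I_m -> R).
Variables (f : 'rV[R]_n -> R) (fstar : R).
Hypotheses (fs_cvx : forall j, convex_fun (fs j)) (f_cvx : convex_fun f).
Hypotheses (mus_gt0 : forall j, 0 < mus j)
  (fs_sc : forall j, strongly_convex (fs j) (mus j)).
Hypothesis fstar_le : forall x, Dset fs x -> fstar <= f x.
Hypothesis no_interior_argmin :
  forall x, (forall x', f x <= f x') -> ~ interior (Dset fs) x.

Lemma Dset_argmin_unique x1 x2 :
  Dset fs x1 -> f x1 = fstar -> Dset fs x2 -> f x2 = fstar -> x1 = x2.
Proof.
move=> D_x1 f_x1 D_x2 f_x2; apply/eqP/negPn/negP => x12.
pose w : 'rV[R]_n := 2^-1 *: x1 + (1 - 2^-1) *: x2.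
have half01 : 0 <= (2^-1 : R) <= 1 by rewrite invr_ge0 ler0n invf_le1 ?ltr0n ?ler1n.
have fs_w j : fs j w < 0.
  apply: le_lt_trans
    (strongly_convex_comb_le (fs_sc j) (lexx _) half01 (D_x1 j) (D_x2 j)) _.
  have D_gt0 : 0 < enorm (x1 - x2) ^+ 2 by rewrite exprn_gt0 ?enorm_gt0 ?subr_eq0.
  have := mulr_gt0 (mus_gt0 j) D_gt0; lra.
have f_w : f w = fstar.
  apply/le_anti; rewrite fstar_le; last by move=> j; apply/ltW.
  by rewrite andbT convex_fun_le_comb // ?f_x1 ?f_x2.
have w_int := interior_Dset fs_cvx fs_w.
apply: (no_interior_argmin _ w_int) => y.
by apply: (convex_fun_local_min_global f_cvx w_int) => z D_z; rewrite f_w fstar_le.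
Qed.

Lemma argmin_dist_sqr_le xstar x mu e :
  Dset fs xstar -> f xstar = fstar -> 0 < mu -> (forall j, mu <= mus j) ->
  0 <= e -> Deps fs e x -> f x <= fstar -> ~ Dset fs x ->
  mu * enorm (x - xstar) ^+ 2 <= e.
Proof.
move=> D_xstar f_xstar mu_gt0 mu_le e_ge0 x_Deps f_x x_notin_D.
rewrite leNgt; apply/negP; set D := enorm (x - xstar) ^+ 2 => e_lt.
have muD_gt0 : 0 < mu * D by apply: le_lt_trans e_lt.
pose t := 1 - e / (mu * D).
have t_gt0 : 0 < t by rewrite subr_gt0 ltr_pdivrMr // mul1r.
have t01 : 0 <= t <= 1 by rewrite (ltW t_gt0) gerBl divr_ge0 // ltW.
pose p := t *: x + (1 - t) *: xstar.
have mu_t_D : mu * (1 - t) * D = e.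
  by rewrite /t opprB addrCA subrr addr0 mulrAC mulrC divfK ?gt_eqF.
have D_p : Dset fs p.
  move=> j; have := strongly_convex_comb_le
    (fs_sc j) (mu_le j) t01 (x_Deps j) (D_xstar j).
  by rewrite -/D mu_t_D subrr mulr0.
have f_p : f p = fstar.
  apply/le_anti; rewrite fstar_le // andbT.
  by rewrite convex_fun_le_comb // f_xstar.
have /eqP : t *: (x - xstar) = 0.
  by rewrite -(subrr xstar) -{2}(Dset_argmin_unique D_p f_p D_xstar f_xstar) /p;
     apply/rowP => i; rewrite !mxE; ring.
rewrite scaler_eq0 gt_eqF //= subr_eq0 => /eqP x_xstar.
by apply: x_notin_D; rewrite x_xstar.
Qed.

Lemma argmin_dist_le_sqrt xstar x mu e :
  Dset fs xstar -> f xstar = fstar -> 0 < mu -> (forall j, mu <= mus j) ->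
  0 <= e -> Deps fs e x -> f x <= fstar -> ~ Dset fs x ->
  enorm (x - xstar) <= Num.sqrt (e / mu).
Proof.
move=> D_xstar f_xstar mu_gt0 mu_le e_ge0 x_Deps f_x x_notin_D.
rewrite -(ger0_norm (enorm_ge0 _)) -sqrtr_sqr ler_sqrt ?divr_ge0 ?(ltW mu_gt0) //.
rewrite ler_pdivlMr // mulrC.
exact: (argmin_dist_sqr_le D_xstar f_xstar mu_gt0 mu_le e_ge0 x_Deps f_x x_notin_D).
Qed.

End ConstrainedArgmin.

Theorem theorem1p1p4 (R : realType) (n m : nat)
  (fs : 'I_m -> 'rV[R]_n -> R) (mus : 'I_m -> R) (mu : R)
  (f : 'rV[R]_n -> R) (fstar : R) (xstar : 'rV[R]_n)
  (M : nat -> 'rV[R]_n -> Prop) (v : 'I_m -> 'rV[R]_n) (eps : nat -> R)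
  (q : R) (y : nat -> 'rV[R]_n) (G Q : nat -> 'rV[R]_n -> Prop)
  (kc : nat -> nat) (z : nat -> 'I_m -> 'rV[R]_n)
  (H : nat -> 'I_m -> Prop) (A : nat -> 'I_m -> seq 'rV[R]_n) :
  (0 < m)%N ->
  (* standing assumptions *)
  (forall j, convex_fun (fs j)) ->
  continuous_fun f ->
  is_min_on f (Dset fs) fstar ->
  (forall j, exists x, interior (Dj fs j) x) ->
  (* additional assumptions *)
  convex_fun f ->
  (forall j, 0 < mus j) ->
  (forall j, strongly_convex (fs j) (mus j)) ->
  slater fs ->
  (forall x, (forall x', f x <= f x') -> ~ interior (Dset fs) x) ->
  is_min_of mus mu ->
  (* the method, with fixed x^* in X^* *)
  Dset fs xstar -> f xstar = fstar ->
  method_1_1_run fs f fstar xstar M v eps q y G Q kc z H A ->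
  (* X^* = {x^*} *)
  (forall x, (Dset fs x /\ f x = fstar) <-> x = xstar) /\
  ((exists B, forall i, reached fs y i -> enorm (y i) <= B) ->
   forall i, sets_xk fs y eps kc i ->
     (* x_(kc i) = y i *)
     enorm (y i - xstar) <= Num.sqrt (eps (kc i) / mu) /\
     (forall L, lipschitz f L ->
        `|f (y i) - fstar| <= L * Num.sqrt (eps (kc i) / mu))).
Proof.
move=> _ fs_cvx _ [_ fstar_le] _ f_cvx mus_gt0 fs_sc _ no_interior_argmin
  [[j mu_def] mu_le] D_xstar f_xstar run.
have argmin_unique := Dset_argmin_unique fs_cvx f_cvx mus_gt0 fs_sc fstar_le
  no_interior_argmin.
split=> [x | _ i [reached_i [[j0 y_notin_Dj0] y_Deps]]].
  by split=> [[D_x f_x] | ->]; [exact: argmin_unique D_x f_x D_xstar f_xstar |].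
case: run => _ _ eps_ge0 _ /(_ i reached_i) [[_ f_y] _].
have y_notin_D : ~ Dset fs (y i) by move/(_ j0).
have mu_gt0 : 0 < mu by rewrite mu_def.
have dist := argmin_dist_le_sqrt fs_cvx f_cvx mus_gt0 fs_sc fstar_le
  no_interior_argmin D_xstar f_xstar mu_gt0 mu_le (eps_ge0 _) y_Deps f_y y_notin_D.
split=> // L f_lip; rewrite -f_xstar.
have y_neq : y i != xstar by apply: contra_notN y_notin_D => /eqP ->.
exact: le_trans (f_lip _ _) (ler_wpM2l (lipschitz_ge0 f_lip y_neq) dist).
Qed.
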